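(* Let $D\subset\mathbb N^n$ be finite, not contained in any coordinate hyperplane, $p$ a prime, $\ell\ge1$, and let $\mathbf e_{-1},\mathbf e_0,\dots,\mathbf e_{\ell-1}\in\Sigma_p(D)$ (not necessarily distinct) with $\mathbf e_{-1}=\mathbf e_{\ell-1}$ and $V(\mathbf e_i,\mathbf e_{i-1})\ne\emptyset$ for $0\le i\le\ell-1$. For each $i$ choose $V_i=(v_{i\mathbf d})_{\mathbf d}\in V(\mathbf e_i,\mathbf e_{i-1})$. Then $U=(u_{\mathbf d})$ with $u_{\mathbf d}=\sum_{i=0}^{\ell-1}p^iv_{i\mathbf d}$ is a minimal element of $E_{D,p}(\ell)$ whose support satisfies $\varphi_U(i)=\mathbf e_{\ell-1-i}$ for $0\le i\le\ell-1$.
   Context: $s_p$ = base-$p$ digit sum. $E_{D,p}(r)$ = set of $U=(u_{\mathbf d})\in\{0,\dots,p^r-1\}^D$ with $\sum u_{\mathbf d}\mathbf d\equiv0\pmod{p^r-1}$ and all coordinates of $\sum u_{\mathbf d}\mathbf d$ positive; $s_p(U)=\sum s_p(u_{\mathbf d})$; $\delta_p(D)=\frac1{p-1}\min_{r\ge1}\min_{U\in E_{D,p}(r)}s_p(U)/r$; minimal means $s_p(U)=(p-1)r\delta_p(D)$. Shift $\delta_r$: $k\mapsto pk\bmod(p^r-1)$ for $k\le p^r-2$, $p^r-1\mapsto p^r-1$, coordinatewise. $\varphi_U(j)=\frac1{p^r-1}\sum\mathbf d(\delta_r^jU)_{\mathbf d}$ for $j\in\mathbb Z/r\mathbb Z$;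 irreducible means $\varphi_U$ injective; $MI_{D,p}$ = minimal irreducible elements of all lengths; $\Sigma_p(D)=\bigcup_{U\in MI_{D,p}}\mathrm{Im}\varphi_U$. $\psi(U)=(u_{\mathbf d}\bmod p)_{\mathbf d}$; $V(\mathbf e,\mathbf e')=\{\psi(U):U\in MI_{D,p},\varphi_U(-1)=\mathbf e,\varphi_U(0)=\mathbf e'\}$. *)

From HB Require Import structures.
From mathcomp Require Import all_boot.
From mathcomp Require Import finmap.

Unset Printing Implicit Defensive.

Local Open Scope fset_scope.

(* Vectors of N^n are n.-tuple nat; D : {fset n.-tuple nat}; an element
   U = (u_d)_{d in D} is a finite function {ffun D -> nat}. *)

Section Defs.
Variables (n : nat) (D : {fset n.-tuple nat}) (p : nat).

(* base-p digit sum s_p(k): digit i is (k %/ p^i) %% p; for p >= 2 all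
   nonzero digits have index i <= k. *)
Definition digsum (k : nat) : nat := \sum_(i < k.+1) (k %/ p ^ i) %% p.

Definition sU (U : {ffun D -> nat}) : nat := \sum_(x : D) digsum (U x).

Definition wsum (U : {ffun D -> nat}) (j : 'I_n) : nat :=
  \sum_(x : D) U x * tnth (val x) j.

Definition inE (r : nat) (U : {ffun D -> nat}) : Prop :=
  (forall x : D, U x < p ^ r) /\
  (forall j : 'I_n, (p ^ r - 1 %| wsum U j) /\ 0 < wsum U j).

(* minimal: s_p(U)/r attains min over all r' >= 1, U' in E_{D,p}(r') *)
Definition minimalE (r : nat) (U : {ffun D -> nat}) : Prop :=
  0 < r /\ inE r U /\
  (forall (r' : nat) (U' : {ffun D -> nat}),
      0 < r' -> inE r' U' -> sU U * r' <= sU U' * r).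

Definition shiftv (r k : nat) : nat :=
  if k == p ^ r - 1 then k else (p * k) %% (p ^ r - 1).

Definition shiftU (r : nat) (U : {ffun D -> nat}) : {ffun D -> nat} :=
  [ffun x => shiftv r (U x)].

(* phi_U(j) for j in Z/rZ, represented by j : nat (read mod r) *)
Definition phi (r : nat) (U : {ffun D -> nat}) (j : nat) : n.-tuple nat :=
  [tuple wsum (iter (j %% r) (shiftU r) U) i %/ (p ^ r - 1) | i < n].

Definition irreducibleU (r : nat) (U : {ffun D -> nat}) : Prop :=
  forall i j, i < r -> j < r -> phi r U i = phi r U j -> i = j.

Definition MI (r : nat) (U : {ffun D -> nat}) : Prop :=
  minimalE r U /\ irreducibleU r U.

Definition inSigma (e : n.-tuple nat) : Prop :=
  exists r (U : {ffun D -> nat}), MI r U /\ exists2 j, j < r & phi r U j = e.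

Definition psi (U : {ffun D -> nat}) : {ffun D -> nat} := [ffun x => U x %% p].

(* v \in V(e, e'), with phi_U(-1) = phi_U(r-1) *)
Definition inV (e e' : n.-tuple nat) (v : {ffun D -> nat}) : Prop :=
  exists r (U : {ffun D -> nat}),
    MI r U /\ phi r U (r - 1) = e /\ phi r U 0 = e' /\ v = psi U.

Definition Vnonempty (e e' : n.-tuple nat) : Prop := exists v, inV e e' v.

End Defs.

Arguments digsum p k.
Arguments sU {n} D p U.
Arguments wsum {n} D U j.
Arguments inE {n} D p r U.
Arguments minimalE {n} D p r U.
Arguments shiftv p r k.
Arguments shiftU {n} D p r U.
Arguments phi {n} D p r U j.
Arguments irreducibleU {n} D p r U.
Arguments MI {n} D p r U.
Arguments inSigma {n} D p e.
Arguments psi {n} D p U.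
Arguments inV {n} D p e e' v.
Arguments Vnonempty {n} D p e e'.

Definition not_in_coord_hyperplane {n : nat} (D : {fset n.-tuple nat}) : Prop :=
  forall j : 'I_n, exists2 d, d \in D & tnth d j != 0.

From Pilot Require Import Defs.
From HB Require Import structures.
From mathcomp Require Import all_boot.
From mathcomp Require Import finmap.
From mathcomp Require Import zify ring.

(* Reading the base-[p] digits of an element [U] of [E_{D,p}(r)] along its shift
   orbit gives a closed walk of length [r] in the graph with edges [a --c--> a']
   whenever [sum_d c_d d + a = p a'], visiting the points [phi_U(j)]; conversely a
   closed walk labelled by digit vectors encodes an element of [E_{D,p}] of the same
   length whose digit sum is the total weight of the labels.  Each [V_i] labels the
   first edge [e_(i-1) --> e_i] of the cycle of a minimal [U_i], so the [V_i] form a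
   closed walk encoding [U], and the remaining edges of all these cycles chain into
   a second closed walk.  Together the two walks have exactly the optimal ratio of
   weight to length; as neither can beat it, both attain it and [U] is minimal.  By
   uniqueness of base-[p] expansions, the walk of [U] is the cycle of [U], which
   gives [phi_U]. *)

Section Digits.
Variables (p : nat) (p_gt1 : 1 < p).

Let p_gt0 : 0 < p. Proof. exact: ltnW. Qed.
Let expp_gt0 k : 0 < p ^ k. Proof. by rewrite expn_gt0 p_gt0. Qed.

Definition digit k u := u %/ p ^ k %% p.

Lemma digit_lt k u : digit k u < p.
Proof. by rewrite ltn_pmod. Qed.

Lemma digit0 u : digit 0 u = u %% p.
Proof. by rewrite /digit expn0 divn1. Qed.

Lemma digitS k u : digit k.+1 u = digit k (u %/ p).
Proof. by rewrite /digit expnS divnMA. Qed.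

Lemma digit_expansion r u : u < p ^ r -> \sum_(k < r) p ^ k * digit k u = u.
Proof.
elim: r u => [|r IH] u; first by rewrite expn0 ltnS leqn0 big_ord0 => /eqP.
move=> u_lt; rewrite big_ord_recl expn0 mul1n digit0.
under eq_bigr do rewrite digitS expnS -mulnA.
rewrite -big_distrr IH ?ltn_divLR // -?expnSr //.
by rewrite /= mulnC addnC -divn_eq.
Qed.

Lemma digsumE K u : u < p ^ K -> digsum p u = \sum_(i < K) digit i u.
Proof.
have small k v : v < p ^ k -> digit k v = 0 by move=> ?; rewrite /digit divn_small ?mod0n.
have widen K1 K2 v : v < p ^ K1 -> K1 <= K2 ->
    \sum_(i < K2) digit i v = \sum_(i < K1) digit i v.
  move=> v_lt leK; rewrite (big_ord_widen K2 (digit^~ v) leK) [RHS]big_mkcond /=.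
  apply: eq_bigr => i _; case: ifP => // /negbT; rewrite -leqNgt => leKi.
  by rewrite small // (leq_trans v_lt) // leq_exp2l.
have u_lt : u < p ^ u.+1 by rewrite (ltn_trans (ltn_expl u p_gt1)) // ltn_exp2l.
move=> u_ltK; rewrite [LHS](_ : _ = \sum_(i < u.+1) digit i u) //.
by case: (leqP K u.+1) => leK; [rewrite (widen K) | rewrite (widen u.+1 K) // ltnW].
Qed.

Lemma digsum_cons c m : c < p -> digsum p (c + p * m) = c + digsum p m.
Proof.
move=> c_lt; have m_lt : m < p ^ m.+1.
  by rewrite (ltn_trans (ltn_expl m p_gt1)) // ltn_exp2l.
have cm_lt : c + p * m < p ^ m.+2.
  by rewrite expnS (leq_trans (_ : _ < p + p * m)) ?ltn_add2r // -mulnS leq_mul2l m_lt orbT.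
rewrite (digsumE _ _ cm_lt) (digsumE _ _ m_lt) big_ord_recl digit0.
rewrite [c + _]addnC [p * m]mulnC modnMDl modn_small //; congr (_ + _); apply: eq_bigr => i _.
by rewrite digitS divnMDl // divn_small // addn0.
Qed.

Lemma expn_sub1_gt0 r : 0 < r -> 0 < p ^ r - 1.
Proof. by move=> r_gt0; rewrite subn_gt0 (leq_trans p_gt1) // -{1}(expn1 p) leq_exp2l. Qed.

(* The top [t] of the [r] base-[p] digits of [u] wrap around to the bottom: this is
   what [t] iterations of the shift do (see [iter_shiftv]). *)
Definition rot_digits r t u := u %% p ^ (r - t) * p ^ t + u %/ p ^ (r - t).

Section Rotation.
Variable r : nat.

Lemma rot_digits0 u : u < p ^ r -> rot_digits r 0 u = u.
Proof. by move=> ?; rewrite /rot_digits subn0 expn0 muln1 modn_small // divn_small // addn0. Qed.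

Lemma rot_digits_full u : rot_digits r r u = u.
Proof. by rewrite /rot_digits subnn expn0 modn1 mul0n divn1. Qed.

Lemma rot_digits_lt {t u} : t <= r -> u < p ^ r -> rot_digits r t u < p ^ r.
Proof.
move=> le_tr u_lt; rewrite /rot_digits.
have E : p ^ r = p ^ (r - t) * p ^ t by rewrite -expnD subnK.
have lo : u %% p ^ (r - t) < p ^ (r - t) by rewrite ltn_pmod.
have hi : u %/ p ^ (r - t) < p ^ t by rewrite ltn_divLR // mulnC -E.
have := expp_gt0 t; rewrite E; move: lo hi.
move: (p ^ (r - t)) (p ^ t) (u %% _) (u %/ _) => P Q a b; nia.
Qed.

Lemma rot_digits_eq_max {t u} : t <= r -> u < p ^ r ->
  rot_digits r t u = p ^ r - 1 -> u = p ^ r - 1.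
Proof.
move=> le_tr u_lt; rewrite /rot_digits.
have E : p ^ r = p ^ (r - t) * p ^ t by rewrite -expnD subnK.
have lo : u %% p ^ (r - t) < p ^ (r - t) by rewrite ltn_pmod.
have hi : u %/ p ^ (r - t) < p ^ t by rewrite ltn_divLR // mulnC -E.
have := divn_eq u (p ^ (r - t)); have := expp_gt0 t; have := expp_gt0 (r - t).
rewrite E; move: lo hi; move: (p ^ (r - t)) (p ^ t) (u %% _) (u %/ _) => P Q a b.
move=> lo hi P_gt0 Q_gt0 u_eq; rewrite u_eq => rot_max.
have a_max : a = P - 1.
  suff : P * Q <= (a + 1) * Q by rewrite leq_pmul2r //; lia.
  nia.
have b_max : b = Q - 1 by rewrite a_max in rot_max; nia.
by rewrite a_max b_max; nia.
Qed.

Lemma rot_digitsS {t u} : t < r -> u < p ^ r ->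
  p * rot_digits r t u = rot_digits r t.+1 u + (p ^ r - 1) * digit (r - t.+1) u.
Proof.
move=> lt_tr u_lt; rewrite /rot_digits /digit.
set P := p ^ (r - t.+1).
have EP : p ^ (r - t) = P * p by rewrite /P -expnSr subnSK.
have E : p ^ r = P * p ^ t.+1 by rewrite /P -expnD subnK.
have P_gt0 : 0 < P := expp_gt0 _.
have d1 := divn_eq u P; have d2 := divn_eq (u %/ P) p.
set q1 := u %/ P in d1 d2 *; set lo := u %% P in d1 *.
set l1 := q1 %% p in d2 *; set q2 := q1 %/ p in d2.
have lo_lt : lo < P by rewrite ltn_pmod.
have l1_lt : l1 < p by rewrite ltn_pmod.
clearbody q1 lo l1 q2.
have u_eq : u = q2 * (P * p) + (l1 * P + lo) by rewrite d1 d2 mulnDl addnA mulnAC mulnA.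
have low_lt : l1 * P + lo < P * p by nia.
rewrite EP.
have -> : u %/ (P * p) = q2 by rewrite u_eq divnMDl ?divn_small ?addn0 // muln_gt0 P_gt0.
have -> : u %% (P * p) = l1 * P + lo by rewrite u_eq modnMDl modn_small.
rewrite E expnS d2; have := expp_gt0 t; move: (p ^ t) => Q Q_gt0.
rewrite mulnBl mul1n.
have : l1 <= P * (p * Q) * l1 by rewrite leq_pmull // !muln_gt0 P_gt0 Q_gt0 p_gt0.
have -> : p * ((l1 * P + lo) * Q + q2) = P * (p * Q) * l1 + lo * (p * Q) + q2 * p by ring.
lia.
Qed.

Lemma rot_digits_max t : t <= r -> rot_digits r t (p ^ r - 1) = p ^ r - 1.
Proof.
have max_lt : p ^ r - 1 < p ^ r by have := expp_gt0 r; lia.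
elim: t => [|t IH] le_tr; first by rewrite rot_digits0.
have := rot_digitsS le_tr max_lt; rewrite IH ?(ltnW le_tr) //.
have := rot_digits_lt le_tr max_lt; have := digit_lt (r - t.+1) (p ^ r - 1).
have := @expn_sub1_gt0 r (leq_ltn_trans (leq0n t) le_tr).
set v := rot_digits _ _ _; set d := digit _ _; move: (p ^ r) => P M_gt0 d_lt v_lt.
have : (P - 1) * d <= (P - 1) * (p - 1) by rewrite leq_mul2l; apply/orP; right; lia.
nia.
Qed.

Lemma iter_shiftv t u : u < p ^ r -> t <= r -> iter t (shiftv p r) u = rot_digits r t u.
Proof.
move=> u_lt; have [->|u_neq] := eqVneq u (p ^ r - 1).
  elim: t => [|t IH] le_tr; first by rewrite rot_digits0 //; lia.
  by rewrite iterS IH ?(ltnW le_tr) // rot_digits_max ?(ltnW le_tr) // /shiftv eqxx rot_digits_max.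
have rot_lt t' : t' <= r -> rot_digits r t' u < p ^ r - 1.
  move=> le_t'r; have := rot_digits_lt le_t'r u_lt; have := rot_digits_eq_max le_t'r u_lt.
  have := expp_gt0 r; move: (rot_digits _ _ _) => v; lia.
elim: t => [|t IH] le_tr; first by rewrite rot_digits0.
rewrite iterS IH ?(ltnW le_tr) // /shiftv ifN; last by rewrite neq_ltn rot_lt ?(ltnW le_tr).
by rewrite rot_digitsS // addnC mulnC modnMDl modn_small // rot_lt.
Qed.

End Rotation.

End Digits.

Lemma mkseqSl (T : Type) (f : nat -> T) m : mkseq f m.+1 = f 0 :: mkseq (f \o succn) m.
Proof. by rewrite /mkseq /= -[1]addn0 iotaDl -map_comp. Qed.

Section Walks.
Variables (n : nat) (D : {fset n.-tuple nat}) (p : nat) (p_gt1 : 1 < p).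

Let p_gt0 : 0 < p. Proof. exact: ltnW. Qed.

Definition is_edge (a : n.-tuple nat) (c : {ffun D -> nat}) (a' : n.-tuple nat) :=
  forall j, wsum D c j + tnth a j = p * tnth a' j.

Definition step := ({ffun D -> nat} * n.-tuple nat)%type.

Fixpoint walk a (s : seq step) : Prop :=
  if s is c :: s' then is_edge a c.1 c.2 /\ walk c.2 s' else True.

Definition walk_end a (s : seq step) := last a (map snd s).

Definition digit_walk (s : seq step) := all (fun c : step => [forall x, c.1 x < p]) s.

Definition walk_weight (s : seq step) := \sum_(c <- s) \sum_x c.1 x.

Fixpoint walk_num (s : seq step) x :=
  if s is c :: s' then c.1 x + p * walk_num s' x else 0.

Definition walk_vec s : {ffun D -> nat} := [ffun x => walk_num s x].

Lemma walk_cat a s1 s2 : walk a (s1 ++ s2) <-> walk a s1 /\ walk (walk_end a s1) s2.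
Proof. by elim: s1 a => [|c s1 IH] a /=; [tauto | rewrite IH; tauto]. Qed.

Lemma walk_end_cat a s1 s2 : walk_end a (s1 ++ s2) = walk_end (walk_end a s1) s2.
Proof. by rewrite /walk_end map_cat last_cat. Qed.

Lemma wsum_walk_vec_cons c s j :
  wsum D (walk_vec (c :: s)) j = wsum D c.1 j + p * wsum D (walk_vec s) j.
Proof.
rewrite /wsum big_distrr -big_split; apply: eq_bigr => x _.
by rewrite !ffunE /= mulnDl mulnA.
Qed.

Lemma walk_telescope a s : walk a s ->
  forall j, wsum D (walk_vec s) j + tnth a j = p ^ size s * tnth (walk_end a s) j.
Proof.
elim: s a => [|c s IH] a /=.
  by move=> _ j; rewrite /wsum big1 ?mul1n // => x _; rewrite ffunE.
move=> [edge_ac walk_s] j; rewrite wsum_walk_vec_cons -addnA addnC -addnA.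
by rewrite [tnth a j + _]addnC edge_ac -mulnDr IH // expnS mulnA.
Qed.

Lemma walk_vec_lt s x : digit_walk s -> walk_vec s x < p ^ size s.
Proof.
rewrite ffunE; elim: s => [|c s IH] /=; first by rewrite expn0.
move=> /andP[/forallP/(_ x) c_lt /IH num_lt]; rewrite expnS.
by rewrite (leq_trans (_ : _ < p + p * walk_num s x)) ?ltn_add2r // -mulnS leq_mul2l num_lt orbT.
Qed.

Lemma sU_walk_vec s : digit_walk s -> sU D p (walk_vec s) = walk_weight s.
Proof.
rewrite /walk_weight; elim: s => [|c s IH] /=.
  by rewrite big_nil /sU big1 // => x _; rewrite ffunE /digsum big_ord1 div0n mod0n.
move=> /andP[/forallP c_lt /IH IHs]; rewrite big_cons -IHs /sU -big_split; apply: eq_bigr => x _.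
by rewrite !ffunE /= digsum_cons.
Qed.

Lemma closed_walk_wsum {a s} : walk a s -> walk_end a s = a ->
  forall j, wsum D (walk_vec s) j = (p ^ size s - 1) * tnth a j.
Proof.
move=> walk_s end_a j; rewrite mulnBl mul1n.
by rewrite -{1}end_a -walk_telescope // addnK.
Qed.

Lemma closed_walk_inE {a s} : walk a s -> walk_end a s = a -> 0 < size s ->
  digit_walk s -> (forall j, 0 < tnth a j) -> Defs.inE D p (size s) (walk_vec s).
Proof.
move=> walk_s end_a s_gt0 dig_s a_gt0; split=> [x|j]; first exact: walk_vec_lt.
rewrite (closed_walk_wsum walk_s end_a) dvdn_mulr //; split=> //.
by rewrite muln_gt0 a_gt0 expn_sub1_gt0.
Qed.

Lemma closed_walk_phi0 {a s} : walk a s -> walk_end a s = a -> 0 < size s ->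
  phi D p (size s) (walk_vec s) 0 = a.
Proof.
move=> walk_s end_a s_gt0; apply: eq_from_tnth => j.
rewrite tnth_mktuple mod0n /= (closed_walk_wsum walk_s end_a) mulKn //.
exact: expn_sub1_gt0.
Qed.

(* Uniqueness of base-[p] expansions. *)
Lemma walk_vec_inj s s' : digit_walk s -> digit_walk s' -> size s = size s' ->
  walk_vec s = walk_vec s' -> map fst s = map fst s'.
Proof.
elim: s s' => [|c s IH] [|c' s'] //= /andP[/forallP c_lt dig_s] /andP[/forallP c'_lt dig_s'].
move=> [size_eq] /ffunP vec_eq.
have num_eq x : c.1 x + p * walk_num s x = c'.1 x + p * walk_num s' x.
  by have := vec_eq x; rewrite !ffunE.
congr (_ :: _).
  apply/ffunP => x; have := congr1 (modn^~ p) (num_eq x).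
  by rewrite ![_ + p * _]addnC ![p * _]mulnC !modnMDl !modn_small.
apply: IH => //; apply/ffunP => x; rewrite !ffunE.
have := congr1 (divn^~ p) (num_eq x).
by rewrite ![_ + p * _]addnC ![p * _]mulnC !divnMDl // !divn_small // !addn0.
Qed.

Lemma walk_vertices_eq a s s' : walk a s -> walk a s' -> map fst s = map fst s' ->
  map snd s = map snd s'.
Proof.
elim: s s' a => [|c s IH] [|c' s'] a //= [edge_c walk_s] [edge_c' walk_s'] [c_eq labels_eq].
have target_eq : c.2 = c'.2.
  apply: eq_from_tnth => j; apply/eqP.
  by rewrite -(eqn_pmul2l p_gt0) -edge_c -edge_c' c_eq.
by rewrite target_eq (IH s' c'.2) // -target_eq.
Qed.

Implicit Types (A : nat -> n.-tuple nat) (C : nat -> {ffun D -> nat}).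

Definition walk_along A C L : seq step := mkseq (fun k => (C k, A k.+1)) L.

Lemma size_walk_along A C L : size (walk_along A C L) = L.
Proof. exact: size_mkseq. Qed.

Lemma walk_alongS A C L :
  walk_along A C L.+1 = (C 0, A 1) :: walk_along (A \o succn) (C \o succn) L.
Proof. exact: mkseqSl. Qed.

Lemma walk_along_closed A C L : (forall k, k < L -> is_edge (A k) (C k) (A k.+1)) ->
  walk (A 0) (walk_along A C L) /\ walk_end (A 0) (walk_along A C L) = A L.
Proof.
elim: L A C => [|L IH] A C edges //; rewrite walk_alongS /=.
have [walk_tail end_tail] := IH (A \o succn) (C \o succn) (fun k k_lt => edges k.+1 k_lt).
by split; [split; [exact: edges | exact: walk_tail] | exact: end_tail].
Qed.

Lemma digit_walk_along A C L : (forall k x, k < L -> C k x < p) ->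
  digit_walk (walk_along A C L).
Proof.
move=> C_lt; apply/allP => c /mapP[k]; rewrite mem_iota => /andP[_ k_lt] -> /=.
by apply/forallP => x; exact: C_lt.
Qed.

Lemma walk_weight_along A C L :
  walk_weight (walk_along A C L) = \sum_(k < L) \sum_x C k x.
Proof.
rewrite /walk_weight big_map -(big_mkord xpredT (fun k => \sum_x C k x)).
by rewrite /index_iota subn0.
Qed.

Lemma walk_vec_along A C L x : walk_vec (walk_along A C L) x = \sum_(k < L) p ^ k * C k x.
Proof.
rewrite ffunE; elim: L A C => [|L IH] A C; first by rewrite big_ord0.
rewrite walk_alongS /= IH big_ord_recl expn0 mul1n big_distrr; congr (_ + _).
by apply: eq_bigr => k _; rewrite /= expnS mulnA.
Qed.

Lemma walk_along_vertex A C L a0 k : k < L -> nth a0 (map snd (walk_along A C L)) k = A k.+1.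
Proof. by move=> k_lt; rewrite (nth_map (C 0, a0)) ?size_mkseq // nth_mkseq. Qed.


Section CycleOfElement.
Variables (r : nat) (r_gt0 : 0 < r) (U : {ffun D -> nat}) (U_lt : forall x, U x < p ^ r).

Definition digitU k : {ffun D -> nat} := [ffun x => digit p k (U x)].

Lemma iter_shiftU t : t <= r -> iter t (shiftU D p r) U = [ffun x => rot_digits p r t (U x)].
Proof.
move=> le_tr; apply/ffunP => x; rewrite ffunE -iter_shiftv //.
by elim: t {le_tr} => [|t IH] /=; rewrite ?ffunE ?IH.
Qed.

Lemma wsum_iter_shiftUS t j : t < r ->
  p * wsum D (iter t (shiftU D p r) U) j =
  wsum D (iter t.+1 (shiftU D p r) U) j + (p ^ r - 1) * wsum D (digitU (r - t.+1)) j.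
Proof.
move=> lt_tr; rewrite !iter_shiftU ?(ltnW lt_tr) // /wsum !big_distrr -big_split /=.
by apply: eq_bigr => x _; rewrite !ffunE mulnA rot_digitsS // mulnDl mulnA.
Qed.

Hypothesis U_dvd : forall j, p ^ r - 1 %| wsum D U j.

Lemma dvdn_wsum_iter_shiftU t j : t <= r -> p ^ r - 1 %| wsum D (iter t (shiftU D p r) U) j.
Proof.
elim: t => [|t IH] le_tr; first exact: U_dvd.
have := dvdn_mull p (IH (ltnW le_tr)); rewrite wsum_iter_shiftUS //.
by rewrite dvdn_addl // dvdn_mulr.
Qed.

Lemma phi_r : phi D p r U r = phi D p r U 0.
Proof. by rewrite /phi modnn mod0n. Qed.

(* [phi] reads its index modulo [r]; for [t = r] we use that [r] shifts restore [U]. *)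
Lemma tnth_phi t j : t <= r ->
  tnth (phi D p r U t) j = wsum D (iter t (shiftU D p r) U) j %/ (p ^ r - 1).
Proof.
rewrite leq_eqVlt => /orP[/eqP ->|lt_tr]; last by rewrite tnth_mktuple modn_small.
rewrite phi_r tnth_mktuple mod0n (@iter_shiftU r (leqnn r)); congr (wsum D _ j %/ _).
by apply/ffunP => x; rewrite ffunE rot_digits_full.
Qed.

Lemma phi_edge k : k < r ->
  is_edge (phi D p r U (r - k)) (digitU k) (phi D p r U (r - k.+1)).
Proof.
move=> lt_kr j; set t := r - k.+1.
have lt_tr : t < r by rewrite /t; lia.
have -> : r - k = t.+1 by rewrite /t; lia.
have -> : k = r - t.+1 by rewrite /t; lia.
rewrite !tnth_phi ?(ltnW lt_tr) //.
have M_gt0 : 0 < p ^ r - 1 by rewrite expn_sub1_gt0.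
have := @wsum_iter_shiftUS t j lt_tr.
rewrite -(divnK (@dvdn_wsum_iter_shiftU t j (ltnW lt_tr))).
rewrite -(divnK (@dvdn_wsum_iter_shiftU t.+1 j lt_tr)).
move: (_ %/ _) (_ %/ _) => a b eq_ab; apply/eqP.
rewrite -(eqn_pmul2r M_gt0) mulnDl -mulnA !mulnK // eq_ab addnC.
by rewrite [wsum _ _ _ * _]mulnC.
Qed.

(* The closed walk traversed by the shift orbit of [U]: the [k]-th step reads digit [k]. *)
Definition cycle := walk_along (fun k => phi D p r U (r - k)) digitU r.

Lemma cycle_closed : walk (phi D p r U 0) cycle /\
  walk_end (phi D p r U 0) cycle = phi D p r U 0.
Proof.
have := walk_along_closed (fun k => phi D p r U (r - k)) digitU r phi_edge.
by rewrite subn0 subnn phi_r.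
Qed.

Lemma digit_walk_cycle : digit_walk cycle.
Proof. by apply: digit_walk_along => k x _; rewrite ffunE digit_lt // ltnW. Qed.

Lemma walk_vec_cycle : walk_vec cycle = U.
Proof.
apply/ffunP => x; rewrite walk_vec_along.
by under eq_bigr do rewrite ffunE; rewrite digit_expansion.
Qed.

Lemma size_cycle : size cycle = r.
Proof. exact: size_walk_along. Qed.

End CycleOfElement.

Arguments cycle_closed {r} r_gt0 {U} U_lt U_dvd.

Lemma closed_walk_cycle {a s} : walk a s -> walk_end a s = a -> 0 < size s -> digit_walk s ->
  map snd (cycle (size s) (walk_vec s)) = map snd s.
Proof.
move=> walk_s end_s s_gt0 dig_s.
have U_lt x : walk_vec s x < p ^ size s by exact: walk_vec_lt.
have U_dvd j : p ^ size s - 1 %| wsum D (walk_vec s) j.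
  by rewrite (closed_walk_wsum walk_s end_s) dvdn_mulr.
have [walk_c _] := cycle_closed s_gt0 U_lt U_dvd.
rewrite (closed_walk_phi0 walk_s end_s s_gt0) in walk_c.
apply: walk_vertices_eq walk_c walk_s _; apply: walk_vec_inj.
- exact: digit_walk_cycle.
- exact: dig_s.
- by rewrite size_cycle.
- exact: walk_vec_cycle.
Qed.

Lemma minimalE_cycle_split {r U} : minimalE D p r U ->
  [/\ is_edge (phi D p r U 0) (psi D p U) (phi D p r U (r - 1)),
      forall j, 0 < tnth (phi D p r U 0) j
    & exists P, [/\ walk (phi D p r U (r - 1)) P,
        walk_end (phi D p r U (r - 1)) P = phi D p r U 0, digit_walk P, size P = r.-1
      & walk_weight P + \sum_x psi D p U x = sU D p U]].
Proof.
move=> [r_gt0 [[U_lt U_E] _]].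
have U_dvd j : p ^ r - 1 %| wsum D U j by have [] := U_E j.
have [walk_c end_c] := cycle_closed r_gt0 U_lt U_dvd.
have dig_c := digit_walk_cycle r U.
have weight_c : walk_weight (cycle r U) = sU D p U.
  by rewrite -sU_walk_vec // walk_vec_cycle.
have size_c := size_cycle r U.
have cycle_eq : cycle r U = (psi D p U, phi D p r U (r - 1)) :: behead (cycle r U).
  rewrite /cycle -(prednK r_gt0) walk_alongS /=; congr ((_, _) :: _).
  by apply/ffunP => x; rewrite !ffunE digit0.
split.
- by move: walk_c; rewrite cycle_eq => -[].
- move=> j; rewrite tnth_phi // divn_gt0 ?expn_sub1_gt0 //.
  by apply: dvdn_leq; case: (U_E j).
- exists (behead (cycle r U)); move: walk_c end_c dig_c weight_c size_c.
  rewrite cycle_eq /= => -[_ walk_P] end_P /andP[_ dig_P].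
  rewrite /walk_weight big_cons addnC => weight_P size_P; split=> //; lia.
Qed.

Lemma minimalE_ratio {r U r' U'} : minimalE D p r U -> minimalE D p r' U' ->
  sU D p U * r' = sU D p U' * r.
Proof.
move=> [r_gt0 [U_E min_U]] [r'_gt0 [U'_E min_U']].
by apply/eqP; rewrite eqn_leq min_U // min_U'.
Qed.

Lemma closed_walk_ratio {r0 U0 a s} : minimalE D p r0 U0 ->
  walk a s -> walk_end a s = a -> digit_walk s -> (forall j, 0 < tnth a j) ->
  sU D p U0 * size s <= walk_weight s * r0.
Proof.
move=> [_ [_ min_U0]] walk_s end_s dig_s a_gt0.
have [->|s_gt0] := posnP (size s); first by rewrite muln0.
by rewrite -sU_walk_vec // min_U0 //; exact: (closed_walk_inE walk_s end_s).
Qed.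

Section ChainOfMinimalCycles.
Variables (A : nat -> n.-tuple nat) (V : nat -> {ffun D -> nat}) (l : nat).
Hypothesis first_edges : forall i, i < l -> exists r U,
  minimalE D p r U /\ phi D p r U (r - 1) = A i.+1 /\ phi D p r U 0 = A i /\ V i = psi D p U.

(* The cycles of the [U_i] with their first edges removed chain into a walk from
   [A k] back to [A 0], and carry the remaining weight of the [U_i]. *)
Lemma remainder_walk {r0 U0} : minimalE D p r0 U0 -> forall k, k <= l ->
  exists C : seq step, [/\ walk (A k) C, walk_end (A k) C = A 0, digit_walk C
    & (walk_weight C + \sum_(i < k) \sum_x V i x) * r0 = sU D p U0 * (size C + k)].
Proof.
move=> min_U0; elim=> [|k IH] lt_kl.
  by exists [::]; split; rewrite //= /walk_weight big_nil big_ord0 muln0.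
have [C [walk_C end_C dig_C weight_C]] := IH (ltnW lt_kl).
have [r [U [min_U [phi_last [phi_0 V_k]]]]] := first_edges _ lt_kl.
have [_ _ [P [walk_P end_P dig_P size_P weight_P]]] := minimalE_cycle_split min_U.
rewrite phi_last phi_0 -V_k in walk_P end_P weight_P.
exists (P ++ C); split.
- by apply/walk_cat; rewrite end_P.
- by rewrite walk_end_cat end_P.
- by rewrite /digit_walk all_cat; apply/andP.
have ratio := minimalE_ratio min_U min_U0.
have r_gt0 : 0 < r by case: min_U.
rewrite /walk_weight big_cat -/(walk_weight P) -/(walk_weight C) big_ord_recr size_cat /=.
have r_eq : r = (size P).+1 by rewrite size_P prednK.
rewrite -weight_P r_eq in ratio; move: ratio weight_C.
move: (walk_weight P) (walk_weight C) (\sum_x V k x) (\sum_(i < k) _) => wP wC v S.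
nia.
Qed.

Hypotheses (l_gt0 : 0 < l) (A_closed : A l = A 0).

Lemma first_edges_closed_walk :
  [/\ walk (A 0) (walk_along A V l), walk_end (A 0) (walk_along A V l) = A 0
    & digit_walk (walk_along A V l)].
Proof.
have [|walk_W end_W] := @walk_along_closed A V l.
  move=> k lt_kl; have [r [U [min_U [phi_last [phi_0 ->]]]]] := first_edges _ lt_kl.
  by have [edge _ _] := minimalE_cycle_split min_U; rewrite -phi_last -phi_0.
split; rewrite ?end_W //; apply: digit_walk_along => k x lt_kl.
by have [r [U [_ [_ [_ ->]]]]] := first_edges _ lt_kl; rewrite ffunE ltn_pmod.
Qed.

Lemma walk_along_minimal : minimalE D p l (walk_vec (walk_along A V l)).
Proof.
have [r0 [U0 [min_U0 [_ [phi_0 _]]]]] := first_edges 0 l_gt0.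
have [_ A0_gt0 _] := minimalE_cycle_split min_U0; rewrite phi_0 in A0_gt0.
have [walk_W end_W dig_W] := first_edges_closed_walk.
have W_gt0 : 0 < size (walk_along A V l) by rewrite size_walk_along.
have W_E := closed_walk_inE walk_W end_W W_gt0 dig_W A0_gt0.
have W_ratio := closed_walk_ratio min_U0 walk_W end_W dig_W A0_gt0.
have [C [walk_C end_C dig_C weight_C]] := remainder_walk min_U0 _ (leqnn l).
rewrite A_closed in walk_C end_C.
have C_ratio := closed_walk_ratio min_U0 walk_C end_C dig_C A0_gt0.
have [r0_gt0 [_ min_r0]] := min_U0.
rewrite size_walk_along in W_E W_ratio.
rewrite -(walk_weight_along A) in weight_C.
have ratio_W : sU D p (walk_vec (walk_along A V l)) * r0 = sU D p U0 * l.
  move: W_ratio C_ratio weight_C; rewrite -sU_walk_vec //.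
  move: (sU _ _ _) (walk_weight C) => w c; nia.
split=> //; split=> // r' U' r'_gt0 U'_E.
rewrite -(leq_pmul2r r0_gt0) mulnAC ratio_W.
by rewrite mulnAC [leqRHS]mulnAC leq_mul2r min_r0 ?orbT.
Qed.

Lemma phi_walk_along i : i < l -> phi D p l (walk_vec (walk_along A V l)) i = A (l - i).
Proof.
move=> lt_il; have [walk_W end_W dig_W] := first_edges_closed_walk.
have := closed_walk_cycle walk_W end_W _ dig_W; rewrite size_walk_along => /(_ l_gt0).
have lt_kl : l.-1 - i < l by lia.
move/(congr1 (fun s => nth (A 0) s (l.-1 - i))); rewrite !walk_along_vertex //.
have -> : l - (l.-1 - i).+1 = i by lia.
by have -> : (l.-1 - i).+1 = l - i by lia.
Qed.

End ChainOfMinimalCycles.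

End Walks.

Arguments walk_vec {n D} p s.
Arguments walk_along {n D} A C L.
Arguments walk_vec_along {n D} p A C L x.
Arguments walk_along_minimal {n D p} p_gt1 {A V l} first_edges l_gt0 A_closed.
Arguments phi_walk_along {n D p} p_gt1 {A V l} first_edges l_gt0 A_closed {i}.

Theorem corollary2p17 (n : nat) (D : {fset n.-tuple nat}) (p l : nat)
  (em1 : n.-tuple nat) (e : nat -> n.-tuple nat)
  (Vs : nat -> {ffun D -> nat}) :
  not_in_coord_hyperplane D ->
  prime p ->
  1 <= l ->
  inSigma D p em1 ->
  (forall i, i < l -> inSigma D p (e i)) ->
  em1 = e l.-1 ->
  (forall i, i < l -> Vnonempty D p (e i) (if i == 0 then em1 else e i.-1)) ->
  (forall i, i < l -> inV D p (e i) (if i == 0 then em1 else e i.-1) (Vs i)) ->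
  let U := [ffun x => \sum_(i < l) p ^ i * Vs i x] in
  minimalE D p l U /\ (forall i, i < l -> phi D p l U i = e (l.-1 - i)).
Proof.
move=> _ p_prime l_gt0 _ _ em1_eq _ V_in U.
pose A k := if k is k'.+1 then e k' else em1.
have first_edges i : i < l -> exists r W, minimalE D p r W /\
    phi D p r W (r - 1) = A i.+1 /\ phi D p r W 0 = A i /\ Vs i = psi D p W.
  move=> lt_il; have [r [W [[min_W _] edge_data]]] := V_in i lt_il.
  by exists r, W; split; last by case: i {lt_il} edge_data.
have A_closed : A l = A 0 by rewrite /A -(prednK l_gt0) -em1_eq.
have U_eq : U = walk_vec p (walk_along A Vs l).
  by apply/ffunP => x; rewrite walk_vec_along ffunE.
have p_gt1 := prime_gt1 p_prime.
rewrite U_eq; split; first exact: walk_along_minimal.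
move=> i lt_il; rewrite (phi_walk_along p_gt1 first_edges l_gt0 A_closed lt_il) /A.
by have -> : l - i = (l.-1 - i).+1 by lia.
Qed.
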